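(* Let $\Sigma$ be a set of $\mathscr{L}$-sentences containing all instances of assigned validity. Then $\mathcal{M}_\Sigma$ satisfies all instances of $E1$, i.e. $\mathcal{M}_\Sigma$ satisfies the universal closure of $K\phi$ for every valid $\mathscr{L}$-formula $\phi$.
   Context: $\mathscr{L}$ is the language of Peano arithmetic (variables, constant $0$, unary $S$, binary $+$, $\cdot$) extended by a unary modal operator $K$: whenever $\phi$ is a formula, $K\phi$ is a formula (called purely modal). An $\mathscr{L}$-structure consists of a first-order structure for the arithmetic part together with a truth value for each purely modal formula $K\phi$ and each assignment $s$ of the variables (satisfying the standard constraints: independence from variables not free in $\phi$, invariance under alphabetic variants, and weak substitution of variables for variables); satisfaction is extended inductively to all formulas. For a set $\Sigma$ of sentences, $\Sigma\models\phi$ means every $\mathscr{L}$-structure satisfying all members of $\Sigma$ satisfies $\phi$ under all assignments; $\phi$ is valid if $\emptyset\models\phi$. For a formula $\phi$ and an assignment $s$ into $\mathbb{N}$, $\phi^s$ is the sentence obtained by replacing each free variable $x$ of $\phi$ by the numeral $\overline{s(x)}$. $\mathcal{M}_\Sigma$ is the $\mathscr{L}$-structure with universe $\mathbb{N}$, arithmetic symbols interpreted as usual, and $\mathcal{M}_\Sigma\models K\phi[s]$ iff $\Sigma\models\phi^s$. The instances of assigned validity are the sentences $\phi^s$ where $\phi$ is a valid $\mathscr{L}$-formula and $s$ is any assignment into $\mathbb{N}$. *)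

From Stdlib Require Import List Arith.
Import ListNotations.

Inductive term : Type :=
| TVar : nat -> term
| TZero : term
| TSucc : term -> term
| TPlus : term -> term -> term
| TTimes : term -> term -> term.

Inductive form : Type :=
| FEq : term -> term -> form
| FNeg : form -> form
| FImp : form -> form -> form
| FAll : nat -> form -> form
| FK : form -> form.

Fixpoint fv_term (t : term) : list nat :=
  match t with
  | TVar x => [x]
  | TZero => []
  | TSucc u => fv_term u
  | TPlus u v | TTimes u v => fv_term u ++ fv_term v
  end.

Fixpoint fv (p : form) : list nat :=
  match p with
  | FEq t u => fv_term t ++ fv_term u
  | FNeg q => fv q
  | FImp q r => fv q ++ fv r
  | FAll x q => filter (fun y => negb (Nat.eqb y x)) (fv q)
  | FK q => fv q
  end.

Definition sentence (p : form) : Prop := fv p = [].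

Definition univ_closure (p : form) : form := fold_right FAll p (fv p).

Fixpoint substv_term (x y : nat) (t : term) : term :=
  match t with
  | TVar z => if Nat.eqb z x then TVar y else TVar z
  | TZero => TZero
  | TSucc u => TSucc (substv_term x y u)
  | TPlus u v => TPlus (substv_term x y u) (substv_term x y v)
  | TTimes u v => TTimes (substv_term x y u) (substv_term x y v)
  end.

Fixpoint substv (x y : nat) (p : form) : form :=
  match p with
  | FEq t u => FEq (substv_term x y t) (substv_term x y u)
  | FNeg q => FNeg (substv x y q)
  | FImp q r => FImp (substv x y q) (substv x y r)
  | FAll z q => if Nat.eqb z x then FAll z q else FAll z (substv x y q)
  | FK q => FK (substv x y q)
  end.

Fixpoint substitutable (y x : nat) (p : form) : Prop :=
  match p with
  | FEq _ _ => True
  | FNeg q => substitutable y x q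
  | FImp q r => substitutable y x q /\ substitutable y x r
  | FAll z q => ~ In x (fv (FAll z q)) \/ (z <> y /\ substitutable y x q)
  | FK q => substitutable y x q
  end.

(** Alphabetic variants (alpha-equivalence), with an environment of
    corresponding bound variables (innermost first). *)
Fixpoint alpha_lookup (env : list (nat * nat)) (x y : nat) : bool :=
  match env with
  | [] => Nat.eqb x y
  | (a, b) :: e =>
      if orb (Nat.eqb a x) (Nat.eqb b y) then andb (Nat.eqb a x) (Nat.eqb b y)
      else alpha_lookup e x y
  end.

Fixpoint alpha_term (env : list (nat * nat)) (t u : term) : Prop :=
  match t, u with
  | TVar x, TVar y => alpha_lookup env x y = true
  | TZero, TZero => True
  | TSucc t1, TSucc u1 => alpha_term env t1 u1
  | TPlus t1 t2, TPlus u1 u2 => alpha_term env t1 u1 /\ alpha_term env t2 u2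
  | TTimes t1 t2, TTimes u1 u2 => alpha_term env t1 u1 /\ alpha_term env t2 u2
  | _, _ => False
  end.

Fixpoint alpha (env : list (nat * nat)) (p q : form) : Prop :=
  match p, q with
  | FEq t1 t2, FEq u1 u2 => alpha_term env t1 u1 /\ alpha_term env t2 u2
  | FNeg p1, FNeg q1 => alpha env p1 q1
  | FImp p1 p2, FImp q1 q2 => alpha env p1 q1 /\ alpha env p2 q2
  | FAll a p1, FAll b q1 => alpha ((a, b) :: env) p1 q1
  | FK p1, FK q1 => alpha env p1 q1
  | _, _ => False
  end.

Definition alphabetic_variant (p q : form) : Prop := alpha [] p q.

Record prestructure : Type := {
  dom : Type;
  zero_i : dom;
  succ_i : dom -> dom;
  plus_i : dom -> dom -> dom;
  times_i : dom -> dom -> dom;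
  (* truth value of each purely modal formula K p under each assignment *)
  kval : form -> (nat -> dom) -> Prop
}.

Definition upd {D : Type} (s : nat -> D) (x : nat) (d : D) : nat -> D :=
  fun y => if Nat.eqb y x then d else s y.

Fixpoint eval_term (M : prestructure) (s : nat -> dom M) (t : term) : dom M :=
  match t with
  | TVar x => s x
  | TZero => zero_i M
  | TSucc u => succ_i M (eval_term M s u)
  | TPlus u v => plus_i M (eval_term M s u) (eval_term M s v)
  | TTimes u v => times_i M (eval_term M s u) (eval_term M s v)
  end.

Fixpoint sat (M : prestructure) (p : form) (s : nat -> dom M) : Prop :=
  match p with
  | FEq t u => eval_term M s t = eval_term M s u
  | FNeg q => ~ sat M q s
  | FImp q r => sat M q s -> sat M r s
  | FAll x q => forall d : dom M, sat M q (upd s x d)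
  | FK q => kval M q s
  end.

Definition is_structure (M : prestructure) : Prop :=
  (forall p (s s' : nat -> dom M),
      (forall x, In x (fv p) -> s x = s' x) -> (kval M p s <-> kval M p s')) /\
  (forall p q s, alphabetic_variant p q -> (kval M p s <-> kval M q s)) /\
  (forall p x y s, substitutable y x p ->
      (kval M (substv x y p) s <-> kval M p (upd s x (s y)))).

Definition satisfies (M : prestructure) (p : form) : Prop :=
  forall s, sat M p s.

Definition consequence (Sigma : form -> Prop) (p : form) : Prop :=
  forall M : prestructure, is_structure M ->
    (forall q, Sigma q -> satisfies M q) -> satisfies M p.

Definition valid (p : form) : Prop := consequence (fun _ => False) p.

Fixpoint numeral (n : nat) : term :=
  match n with
  | O => TZero
  | S m => TSucc (numeral m)
  end.

Fixpoint tsubst (sg : nat -> term) (t : term) : term :=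
  match t with
  | TVar x => sg x
  | TZero => TZero
  | TSucc u => TSucc (tsubst sg u)
  | TPlus u v => TPlus (tsubst sg u) (tsubst sg v)
  | TTimes u v => TTimes (tsubst sg u) (tsubst sg v)
  end.

Fixpoint fsubst (sg : nat -> term) (p : form) : form :=
  match p with
  | FEq t u => FEq (tsubst sg t) (tsubst sg u)
  | FNeg q => FNeg (fsubst sg q)
  | FImp q r => FImp (fsubst sg q) (fsubst sg r)
  | FAll x q => FAll x (fsubst (fun y => if Nat.eqb y x then TVar x else sg y) q)
  | FK q => FK (fsubst sg q)
  end.

Definition inst (p : form) (s : nat -> nat) : form :=
  fsubst (fun x => numeral (s x)) p.

Definition assigned_validity_instance (q : form) : Prop :=
  exists p s, valid p /\ q = inst p s.

Definition M_Sigma (Sigma : form -> Prop) : prestructure := {|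
  dom := nat;
  zero_i := 0;
  succ_i := S;
  plus_i := Nat.add;
  times_i := Nat.mul;
  kval := fun p s => consequence Sigma (inst p s)
|}.

From Stdlib Require Import List.

(* For each assignment s, the instance p^s of a valid p is itself a member of
   Sigma, and every member of Sigma is trivially a consequence of Sigma; so
   K p holds in M_Sigma under every assignment, hence so does its closure. *)

Lemma satisfies_fold_FAll (M : prestructure) (p : form) (xs : list nat) :
  satisfies M p -> satisfies M (fold_right FAll p xs).
Proof.
  intros Hp; induction xs as [|x xs IH]; intros s; simpl; auto.
Qed.

Lemma satisfies_univ_closure (M : prestructure) (p : form) :
  satisfies M p -> satisfies M (univ_closure p).
Proof. apply satisfies_fold_FAll. Qed.

Lemma consequence_of_member (Sigma : form -> Prop) (q : form) :
  Sigma q -> consequence Sigma q.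
Proof. intros Hq M _ HSigma; exact (HSigma q Hq). Qed.

Lemma M_Sigma_satisfies_K_valid (Sigma : form -> Prop) (p : form) :
  (forall q, assigned_validity_instance q -> Sigma q) ->
  valid p -> satisfies (M_Sigma Sigma) (FK p).
Proof.
  intros HA Hp s.
  apply consequence_of_member, HA.
  exists p, s; split; [exact Hp | reflexivity].
Qed.

Theorem lemma14 (Sigma : form -> Prop) :
  (forall q, Sigma q -> sentence q) ->
  (forall q, assigned_validity_instance q -> Sigma q) ->
  forall p : form, valid p -> satisfies (M_Sigma Sigma) (univ_closure (FK p)).
Proof.
  intros _ HA p Hp.
  apply satisfies_univ_closure, M_Sigma_satisfies_K_valid; assumption.
Qed.
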